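(* Let $t\ge 1$ and $n\ge 1$ be integers, let $L_n$ be the line (path graph) on the vertices $x_1,\dots,x_n$ with edges $\{x_k,x_{k+1}\}$, $k=1,\dots,n-1$, and let $S=\Bbbk[x_1,\dots,x_n]$. For all $i\ge 1$, $$b_{i,n}(S/I_t(L_n))=\begin{cases}\delta_{i,\frac{2n}{t+1}} & \text{if } n\equiv 0\pmod{t+1},\\ \delta_{i+1,\frac{2n+2}{t+1}} & \text{if } n\equiv t\pmod{t+1},\\ 0 & \text{otherwise.}\end{cases}$$
   Context: $\Bbbk$ is a field. For a simple graph $G$ whose vertices are variables of $S$ and $t\ge 1$, the path ideal $I_t(G)$ is the ideal generated by all monomials $x_{i_1}\cdots x_{i_t}$ where $x_{i_1},\dots,x_{i_t}$ are $t$ distinct vertices with consecutive ones adjacent in $G$ (it is $0$ if no such path exists). $b_{i,j}(S/I)=\dim_\Bbbk\operatorname{Tor}^S_i(S/I,\Bbbk)_j$ denotes the graded Betti number in homological degree $i$ and internal degree $j$. $\delta$ is the Kronecker delta. *)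

From HB Require Import structures.
From mathcomp Require Import all_boot all_order all_algebra.
Set Implicit Arguments. Unset Strict Implicit. Unset Printing Implicit Defensive.
Import GRing.Theory.

(* Vertices x_1..x_n of S = k[x_1..x_n] are indexed by 'I_n (x_{k+1} <-> k).
   A simple graph is a relation on 'I_n; a monomial is an exponent vector
   'I_n -> nat. *)

Definition line_graph (n : nat) : rel 'I_n :=
  fun a b => (a.+1 == b :> nat) || (b.+1 == a :> nat).

(* Membership of a monomial x^m in the path ideal I_t(G): the monomial ideal
   generated by x_{i_1}...x_{i_t} over paths of t distinct vertices with
   consecutive ones adjacent; x^m lies in it iff some generator divides it. *)
Definition in_path_ideal (n : nat) (G : rel 'I_n) (t : nat) (m : 'I_n -> nat) : bool :=
  [exists p : t.-tuple 'I_n,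
     [&& uniq p,
         (if val p is v :: p' then path G v p' else true)
       & all (fun v => 0 < m v) p]].

(* Graded Betti numbers of S/I for a monomial ideal I (given by its monomial
   membership predicate), computed as Tor^S_i(S/I,k)_j = H_i(K(x; S/I))_j,
   the homology of the Koszul complex on x_1..x_n tensored with S/I.
   K_i(x;S/I)_j has k-basis  m * e_F  with |F| = i, m a monomial of degree
   j - i not in I.  Basis candidates: pairs (F, m) with exponents <= j. *)
Section Koszul.
Variables (F : fieldType) (n : nat) (inI : ('I_n -> nat) -> bool) (j : nat).

Definition kbasis := ({set 'I_n} * {ffun 'I_n -> 'I_j.+1})%type.

Definition kvalid (i : nat) (u : kbasis) : bool :=
  [&& #|u.1| == i, i <= j,
      \sum_(l < n) (u.2 l : nat) == j - i
    & ~~ inI (fun l => (u.2 l : nat))].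

(* Coefficient of v in d(u), d(m e_F) = sum_{k in F} (-1)^{#{l in F, l<k}} x_k m e_{F\k}. *)
Definition kdiff_entry (i : nat) (u v : kbasis) : F :=
  if kvalid i u && kvalid i.-1 v then
    (\sum_(k in u.1)
      (if (v.1 == u.1 :\ k) &&
          [forall l, (v.2 l : nat) == (u.2 l + (l == k))%N]
       then ((-1) ^+ #|[set l in u.1 | (l < k)%N]|)%R else 0%R))%R
  else 0%R.

(* Matrix of d_i : K_i -> K_{i-1} (row-vector convention). *)
Definition kdiff (i : nat) : 'M[F]_(#|{: kbasis}|, #|{: kbasis}|) :=
  \matrix_(a, b) kdiff_entry i (enum_val a) (enum_val b).

(* b_{i,j}(S/I) = dim ker d_i - rank d_{i+1}. *)
Definition betti (i : nat) : nat :=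
  #|[set u | kvalid i u]| - \rank (kdiff i) - \rank (kdiff i.+1).
End Koszul.
Arguments line_graph n : clear implicits.

From mathcomp Require Import all_boot all_order all_algebra zify.

(* b_{i,n} is the dimension of the homology of the Koszul complex of S/I_t(L_n)
   in internal degree n.  Its basis elements m e_F have multidegree m + 1_F, of
   total degree n, preserved by the differential.  Pair each cell with the face or
   coface obtained by moving a pivot vertex between m and F: the first vertex of
   multidegree >= 2 or, for squarefree multidegree (m = x^([n] \ F)), the start
   of the first block [k(t+1), k(t+1)+t] which F does not meet in exactly its two
   ends.  Matched entries of the differential are +-1 and triangular with respect
   to this block level, so they bound the ranks from below, and b_{i,n} is the
   number of unmatched cells of degree i.  The only unmatched cell has
   F = {l | l = 0 or t mod t+1}; it exists exactly when n = 0 or t mod t+1, with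
   |F| = 2n/(t+1) or (2n+2)/(t+1) - 1 respectively. *)

Set Implicit Arguments. Unset Strict Implicit. Unset Printing Implicit Defensive.
Import GRing.Theory.

Section RankBounds.
Local Open Scope ring_scope.
Variables (F : fieldType) (T : finType).

Definition mx_of_fun (E : T -> T -> F) : 'M[F]_(#|{: T}|, #|{: T}|) :=
  \matrix_(a, b) E (enum_val a) (enum_val b).

(* The rows indexed by [U] are free: in a nontrivial relation among them, the row
   [u] of least [rho] is the only one with a nonzero entry in column [psi u]. *)
Lemma card_le_mxrank_triangular (E : T -> T -> F) (U : {set T})
    (psi : T -> T) (rho : T -> nat) :
  (forall u, u \in U -> E u (psi u) != 0) ->
  (forall u u', u \in U -> u' \in U -> u != u' -> E u (psi u') != 0 ->
      (rho u < rho u')%N) ->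
  (#|U| <= \rank (mx_of_fun E))%N.
Proof.
move=> E_diag E_triangular.
pose f (r : 'I_#|U|) : 'I_#|{: T}| := enum_rank (enum_val r).
suff -> : #|U| = \rank (rowsub f (mx_of_fun E)) by apply/mxrankS/rowsub_sub.
apply/esym/eqP; apply: inj_row_free => v v_rel; apply/rowP => r0; rewrite mxE.
apply/eqP/negPn/negP => v_r0.
have [rmin v_rmin rmin_least] :=
  arg_minnP (P := fun r => v 0 r != 0) (fun r => rho (enum_val r)) v_r0.
pose b0 := enum_rank (psi (enum_val rmin)).
have := congr1 (fun M : 'M[F]_(1, #|{: T}|) => M 0 b0) v_rel.
rewrite !mxE (bigD1 rmin) //= big1 ?addr0.
  rewrite !mxE !enum_rankK => /eqP; rewrite mulf_eq0 (negbTE v_rmin) /=.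
  by rewrite (negbTE (E_diag _ (enum_valP rmin))).
move=> r r_neq; rewrite !mxE !enum_rankK.
have [-> | v_r] := eqVneq (v 0 r) 0; first by rewrite mul0r.
have [-> | E_r] := eqVneq (E (enum_val r) (psi (enum_val rmin))) 0; first by rewrite mulr0.
have := E_triangular _ _ (enum_valP r) (enum_valP rmin).
by rewrite (inj_eq enum_val_inj) r_neq ltnNge rmin_least // => /(_ isT E_r).
Qed.

Lemma mulmx_mx_of_fun (E1 E0 : T -> T -> F) :
  mx_of_fun E1 *m mx_of_fun E0 = mx_of_fun (fun u w => \sum_v E1 u v * E0 v w).
Proof.
apply/matrixP => a b; rewrite !mxE.
under eq_bigr do rewrite !mxE.
by rewrite (big_enum_val (fun v => E1 (enum_val a) v * E0 v (enum_val b))).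
Qed.

(* Sylvester's rank inequality for [E1 Vm^T] and [Vm E0], where [Vm] selects the
   coordinates in [V]: their product is [E1 E0 = 0]. *)
Lemma mxrank_add_le_of_mul0 (E1 E0 : T -> T -> F) (V : {set T}) :
  (forall u v, E1 u v != 0 -> v \in V) ->
  (forall v w, E0 v w != 0 -> v \in V) ->
  (forall u w, \sum_v E1 u v * E0 v w = 0) ->
  (\rank (mx_of_fun E1) + \rank (mx_of_fun E0) <= #|V|)%N.
Proof.
move=> supp1 supp0 E10.
pose Vm : 'M[F]_(#|V|, #|{: T}|) := \matrix_(r, b) (enum_val r == enum_val b :> T)%:R.
pose P := Vm^T *m Vm.
have PE a b : P a b = ((a == b) && (enum_val a \in V))%:R.
  rewrite !mxE; under eq_bigr do rewrite !mxE.
  rewrite -(big_enum_val (fun x => (x == enum_val a)%:R * (x == enum_val b)%:R : F)) /=.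
  have [<- | neq_ab] := eqVneq a b; last first.
    rewrite big1 // => x _; case: eqP => [-> | _]; last by rewrite mul0r.
    by rewrite (inj_eq enum_val_inj) (negbTE neq_ab) mulr0.
  case: (boolP (enum_val a \in V)) => Va /=.
    rewrite (bigD1 (enum_val a)) //= eqxx mulr1 big1 ?addr0 //.
    by move=> x /andP[_ /negbTE ->]; rewrite mul0r.
  by rewrite big1 // => x Vx; case: eqP => [ex | _]; [rewrite -ex Vx in Va | rewrite mul0r].
have E1P : mx_of_fun E1 *m P = mx_of_fun E1.
  apply/matrixP => a b; rewrite !mxE (bigD1 b) //= PE eqxx big1 ?addr0.
    case: (boolP (enum_val b \in V)) => Vb; first by rewrite mxE mulr1.
    by rewrite mulr0; apply/esym/eqP; apply: contraNT Vb => /supp1.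
  by move=> c /negbTE neq_cb; rewrite PE neq_cb mulr0.
have PE0 : P *m mx_of_fun E0 = mx_of_fun E0.
  apply/matrixP => a b; rewrite !mxE (bigD1 a) //= PE eqxx big1 ?addr0.
    case: (boolP (enum_val a \in V)) => Va; first by rewrite mxE mul1r.
    by rewrite mul0r; apply/esym/eqP; apply: contraNT Va => /supp0.
  by move=> c /negbTE neq_ca; rewrite PE eq_sym neq_ca mul0r.
have E1E0 : mx_of_fun E1 *m mx_of_fun E0 = 0.
  by rewrite mulmx_mx_of_fun; apply/matrixP => a b; rewrite !mxE E10.
have := mxrank_mul_min (mx_of_fun E1 *m Vm^T) (Vm *m mx_of_fun E0).
rewrite mulmxA -(mulmxA _ _ Vm) -/P E1P E1E0 mxrank0 leqn0 subn_eq0.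
apply: leq_trans; apply: leq_add.
  by rewrite -{1}E1P /P mulmxA mxrankM_maxl.
by rewrite -{1}PE0 /P -mulmxA mxrankM_maxr.
Qed.

End RankBounds.

Lemma sum_antisym_pairs (F : fieldType) n (S : {set 'I_n}) (h : 'I_n -> 'I_n -> F) :
  (forall k l, k \in S -> l \in S -> k != l -> h k l = - h l k)%R ->
  (\sum_(k in S) \sum_(l in S :\ k) h k l = 0)%R.
Proof.
move=> h_antisym.
pose part (lt : 'I_n -> 'I_n -> bool) :=
  (\sum_k \sum_l (if [&& k \in S, l \in S & lt k l] then h k l else 0))%R.
have -> : (\sum_(k in S) \sum_(l in S :\ k) h k l =
           part (fun k l => l < k)%N + part (fun k l => k < l)%N)%R.
  rewrite -big_split big_mkcond /=; apply: eq_bigr => k _.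
  rewrite -big_split /=; case: (boolP (k \in S)) => Sk /=; last first.
    by rewrite big1 // => l _; rewrite addr0.
  rewrite big_mkcond /=; apply: eq_bigr => l _; rewrite !inE.
  case: (boolP (l \in S)) => Sl /=; last by rewrite andbF addr0.
  rewrite andbT; case: (ltngtP l k) => [lk | kl | /val_inj ->].
  - by rewrite neq_ltn lk addr0.
  - by rewrite neq_ltn kl orbT add0r.
  - by rewrite eqxx addr0.
suff -> : part (fun k l => k < l)%N = (- part (fun k l => l < k)%N)%R by rewrite subrr.
rewrite /part exchange_big /= -sumrN; apply: eq_bigr => k _.
rewrite -sumrN; apply: eq_bigr => l _.
case: (boolP (k \in S)) => Sk; case: (boolP (l \in S)) => Sl //=; try by rewrite oppr0.
case: ltnP => kl; last by rewrite oppr0.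
by rewrite (h_antisym _ _ Sl Sk) // neq_ltn kl.
Qed.

Section KoszulDifferential.
Variables (F : fieldType) (n j : nat) (inI : ('I_n -> nat) -> bool).
Hypothesis inI_supp : forall m m' : 'I_n -> nat,
  (forall l, 0 < m l -> 0 < m' l) -> inI m -> inI m'.

Local Notation K := (kbasis n j).

(* [kface u k] is the term [x_k m e_{F \ k}] of the differential of [u = m e_F];
   the exponent [m k + 1] is truncated at [j] by [inord]. *)
Definition kface (u : K) (k : 'I_n) : K :=
  (u.1 :\ k, [ffun l => inord (u.2 l + (l == k))]).

Definition is_kface (u v : K) (k : 'I_n) : bool :=
  (v.1 == u.1 :\ k) && [forall l, (v.2 l : nat) == u.2 l + (l == k)].

Definition ksign (S : {set 'I_n}) (k : 'I_n) : F :=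
  ((-1) ^+ #|[set l in S | (l < k)%N]|)%R.

Lemma kdiff_entryE i (u v : K) : kdiff_entry F inI i u v =
  if kvalid inI i u && kvalid inI i.-1 v then
    (\sum_(k in u.1) (if is_kface u v k then ksign u.1 k else 0))%R else 0%R.
Proof. by []. Qed.

Lemma card_lt_setD1 (S : {set 'I_n}) k l : k \in S ->
  #|[set x in S | x < l]| = (k < l) + #|[set x in S :\ k | x < l]|.
Proof.
move=> Sk; rewrite (cardsD1 k) inE Sk /=; congr (_ + _).
by apply: eq_card => x; rewrite !inE andbA.
Qed.

Lemma ksign_swap (S : {set 'I_n}) k l : k \in S -> l \in S -> k != l ->
  (ksign S k * ksign (S :\ k) l = - (ksign S l * ksign (S :\ l) k))%R.
Proof.
move=> Sk Sl neq_kl; rewrite /ksign (card_lt_setD1 l Sk) (card_lt_setD1 k Sl).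
case: (ltngtP k l) => [kl | lk | /val_inj eq_kl]; last by rewrite eq_kl eqxx in neq_kl.
- by rewrite /= add0n add1n exprS mulN1r mulNr opprK mulrC.
- by rewrite /= add0n add1n exprS mulN1r mulNr mulrC.
Qed.

Lemma kface_exp (u : K) k l : u.2 k < j -> (kface u k).2 l = u.2 l + (l == k) :> nat.
Proof.
move=> uk_lt; rewrite ffunE inordK //.
case: eqP => [-> | _]; first by rewrite addn1 ltnS.
by rewrite addn0 ltn_ord.
Qed.

Lemma is_kfaceE (u v : K) k : is_kface u v k = (v == kface u k) && (u.2 k < j).
Proof.
apply/idP/idP => [/andP[/eqP v1 /forallP v2] | /andP[/eqP -> uk_lt]]; last first.
  by rewrite /is_kface eqxx; apply/forallP => l; rewrite kface_exp.
have uk_lt : u.2 k < j by have := v2 k; rewrite eqxx addn1 => /eqP <-; rewrite -ltnS.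
rewrite uk_lt andbT; case: v v1 v2 => S m /= -> v2.
apply/eqP; congr pair; apply/ffunP => l; apply: val_inj.
by rewrite /= (eqP (v2 l)) ffunE inordK // -(eqP (v2 l)).
Qed.

Lemma setD1_inj (S : {set 'I_n}) c k : c \in S -> k \in S -> S :\ c = S :\ k -> c = k.
Proof.
move=> Sc Sk eqS; apply/eqP/negPn/negP => neq_ck.
have : k \in S :\ c by rewrite !inE eq_sym neq_ck.
by rewrite eqS !inE eqxx.
Qed.

Lemma kdiff_entry_kface i (u : K) c : c \in u.1 -> u.2 c < j ->
  kvalid inI i u -> kvalid inI i.-1 (kface u c) ->
  kdiff_entry F inI i u (kface u c) = ksign u.1 c.
Proof.
move=> u1c uc_lt valid_u valid_v; rewrite kdiff_entryE valid_u valid_v /=.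
rewrite (bigD1 c) //= is_kfaceE eqxx uc_lt /= big1 ?addr0 // => k /andP[u1k neq_kc].
rewrite is_kfaceE; case: eqP => //= eq_face.
by rewrite (setD1_inj u1c u1k (congr1 fst eq_face)) eqxx in neq_kc.
Qed.

Lemma kdiff_entry_neq0 i (u v : K) : kdiff_entry F inI i u v != 0%R ->
  [/\ kvalid inI i u, kvalid inI i.-1 v &
      exists2 k, k \in u.1 & v = kface u k /\ u.2 k < j].
Proof.
rewrite kdiff_entryE; case: andP => [[valid_u valid_v] | _]; last by rewrite eqxx.
move=> sum_neq0; split => //.
have [k u1k] : exists2 k, k \in u.1 & is_kface u v k.
  apply/exists_inP; apply: contraNT sum_neq0; rewrite negb_exists_in => /forall_inP nf.
  by apply/eqP/big1 => k u1k; rewrite (negbTE (nf k u1k)).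
by rewrite is_kfaceE => /andP[/eqP -> ?]; exists k.
Qed.

Lemma sum_delta (k : 'I_n) : \sum_(l < n) (l == k : nat) = 1.
Proof. by rewrite (bigD1 k) //= eqxx big1 // => l /negbTE ->. Qed.

Lemma sum_kface (u : K) k : u.2 k < j ->
  \sum_(l < n) ((kface u k).2 l : nat) = (\sum_(l < n) (u.2 l : nat)).+1.
Proof.
move=> uk_lt; rewrite (eq_bigr _ (fun l _ => kface_exp l uk_lt)) big_split /=.
by rewrite sum_delta addn1.
Qed.

Definition is_kface2 i (u w : K) k l :=
  [&& kvalid inI i.-1 w, w.1 == u.1 :\ k :\ l &
      [forall l', (w.2 l' : nat) == u.2 l' + (l' == k) + (l' == l)]].

Lemma is_kface2C i u w k l : is_kface2 i u w k l = is_kface2 i u w l k.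
Proof.
rewrite /is_kface2 setDDl setUC -setDDl; congr [&& _, _ & _].
by apply: eq_forallb => l'; rewrite addnAC.
Qed.

Lemma is_kface2_valid i (u w : K) k l : kvalid inI i.+1 u -> k \in u.1 ->
  is_kface2 i u w k l -> (u.2 k < j) && kvalid inI i (kface u k).
Proof.
move=> valid_u u1k /and3P[valid_w _ /forallP w2].
have uk_lt : u.2 k < j by have := ltn_ord (w.2 k); rewrite (eqP (w2 k)) eqxx; lia.
rewrite uk_lt /=; case/and4P: valid_u => /eqP card_u i_le /eqP sum_u u_notin.
apply/and4P; split.
- by move: card_u; rewrite (cardsD1 k) u1k add1n => -[->].
- exact: ltnW.
- by rewrite sum_kface // sum_u; apply/eqP; rewrite -subSn // subSS.
- apply/negP => /inI_supp face_in; case/and4P: valid_w => _ _ _ /negP; apply.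
  apply: face_in => l' /=; rewrite kface_exp // (eqP (w2 l')) => pos.
  by apply: leq_trans pos _; rewrite leq_addr.
Qed.

Lemma is_kface_kface i (u w : K) k l : u.2 k < j -> kvalid inI i.-1 w ->
  is_kface (kface u k) w l = is_kface2 i u w k l.
Proof.
move=> uk_lt valid_w; rewrite /is_kface /is_kface2 valid_w /=; congr (_ && _).
by apply: eq_forallb => l'; rewrite kface_exp.
Qed.

Lemma sum_kdiff_entry_kface i (u w : K) k : kvalid inI i.+1 u -> k \in u.1 ->
  (\sum_v (if is_kface u v k then ksign u.1 k else 0) * kdiff_entry F inI i v w =
   \sum_(l in u.1 :\ k) if is_kface2 i u w k l then ksign u.1 k * ksign (u.1 :\ k) l
                        else 0)%R.
Proof.
move=> valid_u u1k; rewrite (bigD1 (kface u k)) //= is_kfaceE eqxx /=.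
rewrite big1 ?addr0 => [|v /negbTE neq_v]; last by rewrite is_kfaceE neq_v mul0r.
have no_face2 : ~~ ((u.2 k < j) && kvalid inI i (kface u k) && kvalid inI i.-1 w) ->
    (\sum_(l in u.1 :\ k) (if is_kface2 i u w k l then
       ksign u.1 k * ksign (u.1 :\ k) l else 0) = 0)%R.
  move=> no; apply/big1 => l _; case f2: is_kface2 => //; case/negP: no.
  by rewrite (is_kface2_valid valid_u u1k f2); case/and3P: f2.
case uk_lt: (u.2 k < j) no_face2 => no_face2; last by rewrite mul0r no_face2.
rewrite kdiff_entryE; case: andP => /= [[valid_v valid_w] | no]; last first.
  by rewrite mulr0 no_face2 //; apply/negP => /andP[] /andP[_ ? ?]; apply: no.
rewrite mulr_sumr; apply: eq_bigr => l _; rewrite (is_kface_kface l uk_lt valid_w).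
by case: is_kface2; rewrite ?mulr0.
Qed.

Lemma kdiff_entry_mul_eq0 i (u w : K) :
  (\sum_v kdiff_entry F inI i.+1 u v * kdiff_entry F inI i v w = 0)%R.
Proof.
case valid_u: (kvalid inI i.+1 u); last first.
  by apply: big1 => v _; rewrite kdiff_entryE valid_u mul0r.
transitivity (\sum_(k in u.1) \sum_v
    (if is_kface u v k then ksign u.1 k else 0) * kdiff_entry F inI i v w)%R.
  rewrite exchange_big /=; apply: eq_bigr => v _; rewrite -big_distrl /= kdiff_entryE.
  rewrite valid_u; case valid_v: (kvalid inI i v) => //=.
  by rewrite (kdiff_entryE _ v) valid_v !mulr0.
under eq_bigr => k u1k do rewrite sum_kdiff_entry_kface //.
apply: sum_antisym_pairs => k l u1k u1l neq_kl; rewrite is_kface2C.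
by case: is_kface2; rewrite ?oppr0 // ksign_swap.
Qed.

End KoszulDifferential.

Lemma in_path_ideal_supp n (G : rel 'I_n) t (m m' : 'I_n -> nat) :
  (forall l, 0 < m l -> 0 < m' l) -> in_path_ideal G t m -> in_path_ideal G t m'.
Proof.
move=> supp /existsP[p /and3P[p_uniq p_path p_supp]]; apply/existsP; exists p.
by rewrite p_uniq p_path; apply/allP => x /(allP p_supp)/supp.
Qed.

Lemma in_path_ideal_supp_eq n (G : rel 'I_n) t (m m' : 'I_n -> nat) :
  (forall l, (0 < m l) = (0 < m' l)) -> in_path_ideal G t m = in_path_ideal G t m'.
Proof. by move=> supp; apply/idP/idP; apply: in_path_ideal_supp => l; rewrite supp. Qed.

Section LinePaths.
Variable n' : nat.
Local Notation n := n'.+1.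
Local Notation L := (line_graph n).

Lemma line_path_iota (s a k : nat) : s + a + k < n ->
  path L (inord (s + a)) [seq inord (s + r) : 'I_n | r <- iota a.+1 k].
Proof.
elim: k a => [|k IHk] a lt_n //=; apply/andP; split; last by apply: IHk; lia.
by rewrite /line_graph !inordK ?addnS ?eqxx //; lia.
Qed.

Lemma line_path_monotone (v : 'I_n) p : path L v p -> uniq (v :: p) ->
  (forall r, r < size p -> nth v p r = v + r.+1 :> nat) \/
  (forall r, r < size p -> nth v p r + r.+1 = v :> nat).
Proof.
elim: p v => [|w p IHp] v; first by left.
rewrite /= => /andP[vw wp] /andP[v_notin w_uniq].
have next_neq_v (x : 'I_n) p' : p = x :: p' -> x = v :> nat -> False.
  by move=> eq_p eq_x; move: v_notin; rewrite eq_p !inE (val_inj eq_x) eqxx orbT.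
have [up | down] := IHp w wp w_uniq; case/orP: vw => /eqP vw.
- left => -[|r] lt_r /=; first lia.
  by rewrite (set_nth_default w) // up //; lia.
- case: p up {IHp wp w_uniq v_notin} next_neq_v => [|x p] up next_neq_v.
    by right => -[|r] //= _; lia.
  by case: (next_neq_v x p) => //; have := up 0 isT; rewrite /=; lia.
- case: p down {IHp wp w_uniq v_notin} next_neq_v => [|x p] down next_neq_v.
    by left => -[|r] //= _; lia.
  by case: (next_neq_v x p) => //; have := down 0 isT; rewrite /=; lia.
- right => -[|r] lt_r /=; first lia.
  by rewrite (set_nth_default w) //; have := down r lt_r; lia.
Qed.

Variable t : nat.
Hypothesis t_gt0 : 0 < t.

Lemma window_in_path_ideal (m : 'I_n -> nat) s : s + t <= n ->
  (forall l : 'I_n, s <= l < s + t -> 0 < m l) -> in_path_ideal L t m.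
Proof.
move=> le_n window.
pose ps := [seq inord (s + r) : 'I_n | r <- iota 0 t].
have size_ps : size ps == t by rewrite size_map size_iota.
apply/existsP; exists (Tuple size_ps); apply/and3P; split.
- rewrite map_inj_in_uniq ?iota_uniq // => a b.
  rewrite !mem_iota !add0n => lt_a lt_b /(congr1 val); rewrite /= !inordK; lia.
- rewrite /= /ps; case: t t_gt0 le_n {window size_ps ps} => // t' _ le_n /=.
  by rewrite -[s]addn0; apply: line_path_iota; lia.
- apply/allP => x /mapP[r]; rewrite mem_iota add0n => lt_r ->.
  by apply: window; rewrite inordK; lia.
Qed.

Lemma path_ideal_window (m : 'I_n -> nat) : in_path_ideal L t m ->
  exists2 s, s + t <= n & forall l : 'I_n, s <= l < s + t -> 0 < m l.
Proof.
case/existsP => -[[|v p] size_p] /and3P[/= p_uniq p_path p_supp].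
  by move: t_gt0; rewrite -(eqP size_p).
have {}size_p : (size p).+1 = t by exact/eqP.
have supp x : x \in v :: p -> 0 < m x.
  by case/andP: p_supp => mv /allP mp; rewrite inE => /orP[/eqP -> | /mp].
have mem_nth_p r : r < size p -> nth v p r \in v :: p.
  by rewrite inE => /(mem_nth v) ->; rewrite orbT.
have [up | down] := line_path_monotone p_path p_uniq.
- exists v.
    case: p size_p up {p_path p_uniq supp mem_nth_p p_supp} => [|x p] size_p up.
      by have := ltn_ord v; move: size_p => /=; lia.
    have := up (size p) (leqnn _); have := ltn_ord (nth v (x :: p) (size p)).
    by move: size_p => /=; lia.
  move=> l /andP[le_vl lt_l]; apply: supp.
  have [eq_lv | /eqP neq_lv] := eqVneq (l : nat) v; first by rewrite inE (val_inj eq_lv) eqxx.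
  have lt_r : l - v - 1 < size p by lia.
  by rewrite (_ : l = nth v p (l - v - 1)) ?mem_nth_p //; apply: ord_inj; rewrite up //; lia.
- have le_t : t.-1 <= v.
    case: p size_p down {p_path p_uniq supp mem_nth_p p_supp} => [|x p] size_p down.
      by rewrite -size_p.
    by rewrite -size_p -(down (size p)) // leq_addl.
  exists (v - t.-1); first by have := ltn_ord v; lia.
  move=> l /andP[le_l lt_l]; apply: supp.
  have [eq_lv | /eqP neq_lv] := eqVneq (l : nat) v; first by rewrite inE (val_inj eq_lv) eqxx.
  have lt_r : v - l - 1 < size p by lia.
  rewrite (_ : l = nth v p (v - l - 1)) ?mem_nth_p //; apply: ord_inj.
  by move: (down _ lt_r); set z := nat_of_ord (nth _ _ _); lia.
Qed.

End LinePaths.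

Lemma sum_mem_card n (S : {set 'I_n}) : \sum_(l < n) (l \in S : nat) = #|S|.
Proof. by rewrite -sum1_card [RHS]big_mkcond; apply: eq_bigr => l _; case: (l \in S). Qed.

Lemma find_iota_eq (P : pred nat) N k : k < N -> P k ->
  (forall k', k' < k -> ~~ P k') -> find P (iota 0 N) = k.
Proof.
move=> lt_kN Pk before_k.
have has_P : has P (iota 0 N) by apply/hasP; exists k; rewrite ?mem_iota.
have lt_find : find P (iota 0 N) < N by move: has_P; rewrite has_find size_iota.
case: (ltngtP (find P (iota 0 N)) k) => // [lt_k | gt_k].
- by have := nth_find 0 has_P; rewrite nth_iota // add0n (negbTE (before_k _ lt_k)).
- by have := before_find 0 gt_k; rewrite nth_iota ?add0n // Pk.
Qed.

Section LineComplex.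
Variables (n' t : nat).
Hypothesis t_gt0 : 0 < t.
Local Notation n := n'.+1.
Local Notation K := (kbasis n n).
Local Notation inI := (in_path_ideal (line_graph n) t).
Local Notation kvalid := (kvalid inI (j := n)).

(* The differential of the Koszul complex preserves the multidegree [m + 1_F]
   of a basis element [u = m e_F]; in internal degree [n] it has total degree [n]. *)
Definition mdeg (u : K) (l : 'I_n) : nat := u.2 l + (l \in u.1).

Lemma sum_mdeg i (u : K) : kvalid i u -> \sum_(l < n) mdeg u l = n.
Proof.
case/and4P => /eqP card_u le_i /eqP sum_u _.
by rewrite big_split /= sum_u sum_mem_card card_u subnK.
Qed.

Lemma mdeg_le i (u : K) l : kvalid i u -> mdeg u l <= n.
Proof. by move=> valid_u; rewrite -(sum_mdeg valid_u) (bigD1 l) //= leq_addr. Qed.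

Lemma squarefree_mdeg i (u : K) : kvalid i u -> (forall l, mdeg u l <= 1) ->
  forall l, mdeg u l = 1.
Proof.
move=> valid_u le1 l; apply/eqP; rewrite eqn_leq le1 lt0n; apply/negP => /eqP mdeg0.
have := sum_mdeg valid_u; rewrite (bigD1 l) //= mdeg0 add0n => sum_n.
have : \sum_(l' < n | l' != l) mdeg u l' <= \sum_(l' < n | l' != l) 1 by apply: leq_sum.
by rewrite sum_n sum1_card cardC1 card_ord; lia.
Qed.

Definition compl_mon (S : {set 'I_n}) (l : 'I_n) : nat := l \notin S.

Lemma compl_mon_gt0 (S : {set 'I_n}) l : (0 < compl_mon S l) = (l \notin S).
Proof. by rewrite /compl_mon; case: (l \in S). Qed.

(* [S] meets every window of [t] consecutive vertices. *)
Definition hitting (S : {set 'I_n}) := ~~ inI (compl_mon S).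

Lemma squarefree_exp i (u : K) : kvalid i u -> (forall l, mdeg u l <= 1) ->
  forall l, u.2 l = compl_mon u.1 l :> nat.
Proof.
move=> valid_u le1 l; have := squarefree_mdeg valid_u le1 l.
by rewrite /mdeg /compl_mon; case: (l \in u.1) => /=; lia.
Qed.

Lemma squarefree_hitting i (u : K) : kvalid i u -> (forall l, mdeg u l <= 1) -> hitting u.1.
Proof.
move=> valid_u le1; case/and4P: (valid_u) => _ _ _; rewrite /hitting.
rewrite (@in_path_ideal_supp_eq _ _ _ _ (fun l => u.2 l)) // => l.
by rewrite (squarefree_exp valid_u le1).
Qed.

Lemma hitting_window (S : {set 'I_n}) s : hitting S -> s + t <= n ->
  exists l : 'I_n, (l \in S) && (s <= l < s + t).
Proof.
move=> hit_S le_n; apply/existsP; apply: contraR hit_S => /existsPn miss.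
apply: (window_in_path_ideal t_gt0 le_n) => l in_window.
by have := miss l; rewrite in_window andbT compl_mon_gt0.
Qed.

Lemma window_hitting (S : {set 'I_n}) :
  (forall s, s + t <= n -> exists l : 'I_n, (l \in S) && (s <= l < s + t)) -> hitting S.
Proof.
move=> hit; apply/negP => /(path_ideal_window t_gt0) [s le_n miss].
by have [l /andP[Sl in_window]] := hit s le_n; have := miss l in_window; rewrite compl_mon_gt0 Sl.
Qed.

Definition mem_nat (S : {set 'I_n}) (x : nat) : bool :=
  [exists l : 'I_n, (l \in S) && (l == x :> nat)].

Definition is_block_end (x : nat) : bool := (x %% t.+1 == 0) || (x %% t.+1 == t).

Definition block_complete (S : {set 'I_n}) (k : nat) : bool :=
  [&& mem_nat S (k * t.+1), mem_nat S (k * t.+1 + t) &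
      [forall l : 'I_n, (k * t.+1 < l < k * t.+1 + t) ==> ~~ mem_nat S l]].

Definition level (S : {set 'I_n}) : nat :=
  find (fun k => ~~ block_complete S k) (iota 0 n.+1).

Lemma mem_natE (S : {set 'I_n}) (l : 'I_n) : mem_nat S l = (l \in S).
Proof.
apply/existsP/idP => [[l' /andP[Sl' /eqP/ord_inj <-]] // | Sl].
by exists l; rewrite Sl eqxx.
Qed.

Lemma mem_natP (S : {set 'I_n}) x :
  reflect (exists2 l : 'I_n, l \in S & l = x :> nat) (mem_nat S x).
Proof.
apply: (iffP existsP) => [[l /andP[Sl /eqP eq_l]] | [l Sl eq_l]]; exists l => //.
by rewrite Sl eq_l eqxx.
Qed.

Lemma mem_nat_lt (S : {set 'I_n}) x : mem_nat S x -> x < n.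
Proof. by case/mem_natP => l _ <-. Qed.

Lemma block_complete_lt (S : {set 'I_n}) k : block_complete S k -> k * t.+1 + t < n.
Proof. by case/and3P => _ /mem_nat_lt. Qed.

Lemma level_eq (S : {set 'I_n}) k : (forall k', k' < k -> block_complete S k') ->
  ~~ block_complete S k -> level S = k.
Proof.
move=> complete_below incomplete; apply: find_iota_eq => // [|k' /complete_below ->//].
case: k complete_below {incomplete} => // k complete_below.
by have := block_complete_lt (complete_below k (leqnn _)); nia.
Qed.

Lemma level_spec (S : {set 'I_n}) : [/\ forall k, k < level S -> block_complete S k,
  ~~ block_complete S (level S) & level S * t.+1 <= n].
Proof.
have has_incomplete : has (fun k => ~~ block_complete S k) (iota 0 n.+1).
  apply/hasP; exists n; first by rewrite mem_iota; lia.
  by apply/negP => /block_complete_lt; nia.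
have lt_level : level S < n.+1 by move: has_incomplete; rewrite has_find size_iota.
have complete_below k : k < level S -> block_complete S k.
  by move=> lt_k; have := before_find 0 lt_k; rewrite nth_iota ?add0n ?negbK //; lia.
split => //; first by have := nth_find 0 has_incomplete; rewrite nth_iota.
by case E: (level S) => [|k] //; have := block_complete_lt (complete_below k _); rewrite E; nia.
Qed.

Lemma mem_nat_below_level (S : {set 'I_n}) k : (forall k', k' < k -> block_complete S k') ->
  forall x, x < k * t.+1 -> mem_nat S x = is_block_end x.
Proof.
move=> complete_below x lt_x; rewrite /is_block_end.
have /complete_below/and3P[start_in end_in /forallP interior] : x %/ t.+1 < k by rewrite ltn_divLR.
have x_eq := divn_eq x t.+1; have lt_mod := ltn_pmod x (ltn0Sn t).
case: eqP => [mod0 | mod0] /=; first by rewrite x_eq mod0 addn0.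
case: eqP => [modt | modt]; first by rewrite x_eq modt.
have lt_n : x < n by have := mem_nat_lt end_in; lia.
apply/negbTE; apply: (implyP (interior (Ordinal lt_n))) => /=.
by apply/andP; split; lia.
Qed.

Lemma block_complete_ext (S S' : {set 'I_n}) k :
  (forall x, x <= k * t.+1 + t -> mem_nat S x = mem_nat S' x) ->
  block_complete S k = block_complete S' k.
Proof.
move=> eqS; rewrite /block_complete !eqS ?leq_addr //; congr [&& _, _ & _].
apply: eq_forallb => l; case: (boolP (_ < l < _)) => //= /andP[_ lt_l].
by rewrite eqS //; lia.
Qed.

Definition block_ends : {set 'I_n} := [set l : 'I_n | is_block_end l].

Lemma modn_block k r : r < t.+1 -> (k * t.+1 + r) %% t.+1 = r.
Proof. by move=> lt_r; rewrite modnMDl modn_small. Qed.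

Lemma mem_nat_setD1 (S : {set 'I_n}) (c : 'I_n) (x : nat) :
  x != c -> mem_nat (S :\ c) x = mem_nat S x.
Proof.
move=> neq_xc; apply/mem_natP/mem_natP => -[l Sl eq_l]; exists l => //.
  by move: Sl; rewrite inE => /andP[].
by rewrite !inE Sl andbT; apply: contra neq_xc => /eqP eq_lc; rewrite -eq_l eq_lc.
Qed.

Lemma mem_nat_setU1 (S : {set 'I_n}) (c : 'I_n) (x : nat) :
  x != c -> mem_nat (c |: S) x = mem_nat S x.
Proof.
move=> neq_xc; apply/mem_natP/mem_natP => -[l Sl eq_l]; exists l => //; last first.
  by rewrite !inE Sl orbT.
by move: Sl; rewrite !inE => /orP[/eqP eq_lc | //]; move: neq_xc; rewrite -eq_l eq_lc eqxx.
Qed.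

Lemma mem_nat_block_ends x :
  mem_nat block_ends x = (x < n) && is_block_end x.
Proof.
apply/mem_natP/andP => [[l] | [lt_x ends_x]]; first by rewrite inE => ends_l <-.
by exists (Ordinal lt_x); rewrite ?inE.
Qed.

Lemma hittingE (S : {set 'I_n}) : hitting S =
  [forall s : 'I_n.+1, (s + t <= n) ==> [exists l : 'I_n, (l \in S) && (s <= l < s + t)]].
Proof.
apply/idP/forallP => [hit_S s | hit_S].
  by apply/implyP => le_n; apply/existsP; apply: hitting_window.
apply: window_hitting => s le_n; have lt_s : s < n.+1 by lia.
by have := hit_S (Ordinal lt_s); rewrite /= le_n => /existsP.
Qed.

Lemma level_setD1 (S : {set 'I_n}) (c : 'I_n) : c \in S -> c = level S * t.+1 :> nat ->
  level (S :\ c) = level S.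
Proof.
move=> Sc eq_c; have [complete_below incomplete _] := level_spec S.
apply: level_eq => [k lt_k | ].
  rewrite (@block_complete_ext _ S) ?complete_below // => x le_x.
  by apply: mem_nat_setD1; apply/eqP => eq_x; move: le_x; rewrite eq_x eq_c; nia.
by apply/negP => /and3P[]; rewrite -eq_c mem_natE !inE eqxx.
Qed.

(* Adding the start of the first incomplete block cannot complete it: a hitting
   set meets the window of length [t] starting there in an interior point. *)
Lemma level_setU1 (S : {set 'I_n}) (c : 'I_n) : hitting S -> c \notin S ->
  c = level S * t.+1 :> nat -> level (c |: S) = level S.
Proof.
move=> hit_S Sc eq_c; have [complete_below incomplete _] := level_spec S.
apply: level_eq => [k lt_k | ].
  rewrite (@block_complete_ext _ S) ?complete_below // => x le_x.
  by apply: mem_nat_setU1; apply/eqP => eq_x; move: le_x; rewrite eq_x eq_c; nia.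
apply/negP => complete; have lt_n := block_complete_lt complete.
case/and3P: complete => _ _ /forallP interior.
have [l /andP[Sl in_window]] := hitting_window (s := c) hit_S ltac:(lia).
have neq_lc : l != c by apply: contraNneq Sc => <-.
have : c < l < c + t by move: neq_lc; rewrite -val_eqE /= => ?; apply/andP; split; lia.
by rewrite eq_c => /(implyP (interior l)); rewrite mem_natE !inE Sl orbT.
Qed.

Lemma level_full (S : {set 'I_n}) : level S * t.+1 = n -> S = block_ends.
Proof.
move=> full; have [complete_below _ _] := level_spec S.
by apply/setP => x; rewrite -mem_natE (mem_nat_below_level complete_below) ?full // inE.
Qed.

Lemma hitting_block_ends : hitting block_ends.
Proof.
apply: window_hitting => s le_n.
have lt_mod := ltn_pmod s (ltn0Sn t); have s_eq := divn_eq s t.+1.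
have [mod0 | mod_pos] := posnP (s %% t.+1).
  have lt_s : s < n by lia.
  by exists (Ordinal lt_s); rewrite inE /is_block_end /= mod0; lia.
have lt_l : s + (t - s %% t.+1) < n by lia.
exists (Ordinal lt_l); rewrite inE /is_block_end /=; apply/andP; split; last by lia.
rewrite (_ : s + _ = s %/ t.+1 * t.+1 + t); last by lia.
by rewrite modn_block // eqxx orbT.
Qed.

Lemma level_block_ends k : n = k * t.+1 \/ n = k * t.+1 + t -> level block_ends = k.
Proof.
move=> n_eq; apply: level_eq => [k' lt_k' | ]; last first.
  by apply/negP => /block_complete_lt; case: n_eq; lia.
apply/and3P; split.
- by rewrite mem_nat_block_ends /is_block_end modnMl eqxx andbT; case: n_eq; nia.
- by rewrite mem_nat_block_ends /is_block_end modn_block // eqxx orbT andbT; case: n_eq; nia.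
- apply/forallP => l; apply/implyP => in_block.
  rewrite mem_nat_block_ends /is_block_end negb_and; apply/orP; right.
  rewrite (_ : nat_of_ord l = k' * t.+1 + (l - k' * t.+1)); last by lia.
  by rewrite modn_block; [apply/norP; split; apply/eqP | ]; lia.
Qed.

Lemma not_hitting_block_ends_setD1 (c : 'I_n) : c + t = n -> c %% t.+1 = 0 ->
  ~~ hitting (block_ends :\ c).
Proof.
move=> end_c mod_c; rewrite negbK; apply: (window_in_path_ideal t_gt0 (s := c)); first by lia.
move=> l /andP[le_l lt_l]; rewrite compl_mon_gt0 !inE /is_block_end negb_and negbK.
case: (ltngtP l c) => [| gt_l | /val_inj ->]; [lia | | by rewrite eqxx].
apply/orP; right; have c_eq := divn_eq c t.+1; rewrite mod_c addn0 in c_eq.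
rewrite (_ : nat_of_ord l = c %/ t.+1 * t.+1 + (l - c)); last by lia.
by rewrite modn_block; [apply/norP; split; apply/eqP | ]; lia.
Qed.

Section EssentialLevelStart.
Variables (S : {set 'I_n}) (c : 'I_n).
Hypotheses (hit_S : hitting S) (Sc : c \in S) (eq_c : c = level S * t.+1 :> nat).
Hypothesis not_hit : ~~ hitting (S :\ c).

Lemma essential_level_start_window :
  c + t <= n /\ forall l : 'I_n, l \in S -> ~~ (c < l < c + t).
Proof.
move: not_hit; rewrite hittingE negb_forall => /existsP[s].
rewrite negb_imply => /andP[le_n /existsPn miss].
have only_c l : l \in S -> s <= l < s + t -> l = c.
  by move=> Sl in_w; apply/eqP/negPn/negP => neq; have := miss l; rewrite !inE neq Sl in_w.
have [l /andP[Sl in_w]] := hitting_window hit_S le_n.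
have {}in_w : s <= c < s + t by rewrite -(only_c _ Sl in_w).
suff eq_s : s = c :> nat.
  split=> [|l' Sl']; first by rewrite -eq_s.
  apply/negP => in_int; have := only_c l' Sl'; rewrite eq_s.
  by move=> /(_ ltac:(lia)) eq_l'; rewrite eq_l' ltnn in in_int.
case E: (level S) eq_c => [|k] eq_c'; first by move: in_w; rewrite eq_c'; lia.
have [complete_below _ _] := level_spec S.
have /and3P[_ /mem_natP[p Sp eq_p] _] := complete_below k ltac:(lia).
have neq_pc : p != c by rewrite -val_eqE /= eq_p eq_c'; apply/eqP; lia.
have p_out : ~~ (s <= p < s + t) by apply: contra neq_pc => /(only_c p Sp) ->.
by move: p_out; rewrite negb_and -!ltnNge eq_p => /orP[]; lia.
Qed.

Lemma essential_level_start_end : n = c + t.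
Proof.
have [le_n interior_free] := essential_level_start_window.
have [_ incomplete _] := level_spec S.
apply/eqP; rewrite eqn_leq le_n andbT leqNgt; apply/negP => lt_n.
case: (boolP (mem_nat S (c + t))) => [end_in | end_out].
  case/negP: incomplete; apply/and3P; split; rewrite -?eq_c ?mem_natE //.
  apply/forallP => x; apply/implyP => in_int; rewrite mem_natE.
  by apply: contraL in_int => /interior_free; rewrite eq_c.
have [y /andP[Sy in_w]] := hitting_window (s := c.+1) hit_S ltac:(lia).
have neq_y : y != c + t :> nat by apply: contraNneq end_out => <-; rewrite mem_natE.
by have := interior_free y Sy; move: neq_y; rewrite negb_and -!ltnNge => /eqP ? /orP[]; lia.
Qed.

Lemma essential_level_start_block_ends : S = block_ends.
Proof.
have [complete_below _ _] := level_spec S.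
have [_ interior_free] := essential_level_start_window.
have end_c := essential_level_start_end.
apply/setP => x; rewrite inE; case: (ltngtP x c) => [lt_x | gt_x | /ord_inj ->].
- by rewrite -mem_natE (mem_nat_below_level complete_below) // -eq_c.
- have in_int : c < x < c + t by rewrite gt_x -end_c ltn_ord.
  rewrite (_ : x \in S = false); last by apply/negP => /interior_free; rewrite in_int.
  rewrite (_ : nat_of_ord x = level S * t.+1 + (x - c)); last by lia.
  by rewrite /is_block_end modn_block; [apply/esym/norP; split; apply/eqP | ]; lia.
- by rewrite Sc /is_block_end eq_c modnMl.
Qed.

End EssentialLevelStart.

Definition heavy (u : K) : option 'I_n := [pick l | 1 < mdeg u l].

Definition pivot (u : K) : option 'I_n :=
  if heavy u is Some l then Some l else insub (level u.1 * t.+1).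

Definition kcoface (u : K) (c : 'I_n) : K :=
  (c |: u.1, [ffun l => inord (u.2 l - (l == c))]).

Definition paired_down i := [set u : K | kvalid i u &&
  (if pivot u is Some c then [&& c \in u.1, u.2 c < n & kvalid i.-1 (kface u c)]
   else false)].

Definition paired_up i :=
  [set u : K | kvalid i u && (if pivot u is Some c then c \notin u.1 else false)].

Definition critical i := [set u : K | kvalid i u] :\: (paired_down i :|: paired_up i).

Definition pair_up (u : K) := if pivot u is Some c then kcoface u c else u.
Definition pair_down (u : K) := if pivot u is Some c then kface u c else u.

Lemma kcoface_exp (u : K) c l : (kcoface u c).2 l = u.2 l - (l == c) :> nat.
Proof. by rewrite ffunE inordK //; have := ltn_ord (u.2 l); lia. Qed.

Lemma mdeg_kface (u : K) c : c \in u.1 -> u.2 c < n -> mdeg (kface u c) =1 mdeg u.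
Proof.
move=> u1c lt_c l; rewrite /mdeg kface_exp // !inE.
by case: (eqVneq l c) => [-> | _] /=; rewrite ?u1c ?addn1 ?addn0.
Qed.

Lemma mdeg_kcoface (u : K) c : c \notin u.1 -> 0 < u.2 c -> mdeg (kcoface u c) =1 mdeg u.
Proof.
move=> u1c pos_c l; rewrite /mdeg kcoface_exp !inE.
by case: (eqVneq l c) => [-> | _] /=; rewrite ?(negbTE u1c) ?subn0 //; lia.
Qed.

Lemma kface_kcoface (u : K) c : c \notin u.1 -> 0 < u.2 c -> kface (kcoface u c) c = u.
Proof.
case: u => S m /= Sc pos_c; congr pair; first by rewrite setU1K.
apply/ffunP => l; apply: val_inj; rewrite ffunE /= inordK ?ffunE ?inordK.
all: by have := ltn_ord (m l); case: (eqVneq l c) => [-> | _]; lia.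
Qed.

Lemma kcoface_kface (u : K) c : c \in u.1 -> u.2 c < n -> kcoface (kface u c) c = u.
Proof.
case: u => S m /= Sc lt_c; congr pair; first by rewrite setD1K.
apply/ffunP => l; apply: val_inj; rewrite ffunE /= inordK ?ffunE ?inordK.
all: by have := ltn_ord (m l); case: (eqVneq l c) => [-> | _]; lia.
Qed.

Lemma heavy_eq (u v : K) : mdeg u =1 mdeg v -> heavy u = heavy v.
Proof. by move=> eq_mdeg; apply: eq_pick => l; rewrite /= eq_mdeg. Qed.

Lemma pivot_eq (u v : K) : mdeg u =1 mdeg v ->
  (heavy u = None -> level v.1 = level u.1) -> pivot v = pivot u.
Proof.
move=> eq_mdeg eq_level; rewrite /pivot -(heavy_eq eq_mdeg).
by case: (heavy u) eq_level => // ->.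
Qed.

Lemma heavyP (u : K) c : heavy u = Some c -> 1 < mdeg u c.
Proof. by rewrite /heavy; case: pickP => // x lt_x [<-]. Qed.

Lemma heavy_None (u : K) : heavy u = None -> forall l, mdeg u l <= 1.
Proof. by rewrite /heavy; case: pickP => // no_heavy _ l; rewrite leqNgt no_heavy. Qed.

Lemma pivot_heavy (u : K) c l : heavy u = Some l -> pivot u = Some c -> c = l.
Proof. by rewrite /pivot => -> [->]. Qed.

Lemma pivot_level (u : K) c : heavy u = None -> pivot u = Some c ->
  c = level u.1 * t.+1 :> nat.
Proof. by rewrite /pivot => ->; case: insubP => // c' _ eq_c' [<-]. Qed.

Lemma kvalid_kcoface i (u : K) c : kvalid i u -> c \notin u.1 -> 0 < u.2 c ->
  kvalid i.+1 (kcoface u c).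
Proof.
case/and4P => /eqP card_u le_i /eqP sum_u u_notin u1c pos_c.
have sum_eq : \sum_(l < n) (u.2 l : nat) = \sum_(l < n) ((kcoface u c).2 l : nat) + 1.
  rewrite -(sum_delta c) -big_split /=; apply: eq_bigr => l _; rewrite kcoface_exp.
  by case: (eqVneq l c) => [-> | _]; lia.
have lt_i : i < n.
  have : u.2 c <= \sum_(l < n) (u.2 l : nat) by rewrite (bigD1 c) //= leq_addr.
  by rewrite sum_u; lia.
apply/and4P; split => //.
- by rewrite cardsU1 u1c card_u.
- by apply/eqP; lia.
- by apply: contra u_notin; apply: in_path_ideal_supp => l; rewrite kcoface_exp; lia.
Qed.

Lemma kvalid_kface_heavy i (u : K) c : kvalid i u -> c \in u.1 -> 1 < mdeg u c ->
  u.2 c < n /\ kvalid i.-1 (kface u c).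
Proof.
move=> valid_u u1c heavy_c.
have := mdeg_le c valid_u; rewrite /mdeg u1c in heavy_c * => le_n.
have lt_c : u.2 c < n by lia.
split => //; case/and4P: valid_u => /eqP card_u le_i /eqP sum_u u_notin.
have i_gt0 : 0 < i by rewrite -card_u; apply/card_gt0P; exists c.
apply/and4P; split.
- by move: card_u; rewrite (cardsD1 c) u1c => <-.
- lia.
- by rewrite sum_kface // sum_u; apply/eqP; lia.
- rewrite (@in_path_ideal_supp_eq _ _ _ _ (fun l => u.2 l)) // => l.
  by rewrite kface_exp //; case: eqP => [-> |]; lia.
Qed.

Lemma kvalid_kface_squarefree i (u : K) c : kvalid i u -> (forall l, mdeg u l <= 1) ->
  c \in u.1 -> kvalid i.-1 (kface u c) = hitting (u.1 :\ c).
Proof.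
move=> valid_u le1 u1c; have u_exp := squarefree_exp valid_u le1.
have lt_c : u.2 c < n by rewrite u_exp /compl_mon u1c.
case/and4P: valid_u => /eqP card_u le_i /eqP sum_u _.
have i_gt0 : 0 < i by rewrite -card_u; apply/card_gt0P; exists c.
rewrite /kvalid /= sum_kface // sum_u (_ : #|u.1 :\ c| = i.-1); last first.
  by move: card_u; rewrite (cardsD1 c) u1c => <-.
rewrite eqxx (_ : i.-1 <= n) /=; last by lia.
rewrite (_ : (n - i).+1 == n - i.-1) /=; last by apply/eqP; lia.
congr negb; apply: in_path_ideal_supp_eq => l.
rewrite kface_exp // u_exp compl_mon_gt0 /compl_mon !inE.
by case: eqP => [-> |]; rewrite ?u1c //=; case: (l \in u.1).
Qed.

Lemma level_exchange (S S' : {set 'I_n}) k c : k \in S -> c \in S' -> c \notin S ->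
  S :\ k = S' :\ c -> c = level S' * t.+1 :> nat ->
  (k < c -> level S < level S') /\ (c < k -> level S = level S').
Proof.
move=> Sk S'c Sc eqS eq_c; have eq_level := level_setD1 S'c eq_c.
have [complete_S' _ _] := level_spec (S' :\ c); rewrite eq_level in complete_S'.
split=> [lt_kc | lt_ck].
  rewrite ltnNge; apply/negP => le_level.
  have [complete_S _ _] := level_spec S.
  have complete_below k' : k' < level S' -> block_complete S k'.
    by move=> lt_k'; apply: complete_S; lia.
  have lt_k : k < level S' * t.+1 by rewrite -eq_c.
  have := mem_nat_below_level complete_below lt_k.
  by rewrite -(mem_nat_below_level complete_S' lt_k) -eqS !mem_natE !inE eqxx Sk.
apply: level_eq => [k' lt_k' | ].
  rewrite -[S](setD1K Sk) (@block_complete_ext _ (S :\ k)) eqS ?complete_S' // => x le_x.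
  by apply: mem_nat_setU1; apply/eqP => eq_x; move: le_x; rewrite eq_x; nia.
by apply/negP => /and3P[]; rewrite -eq_c mem_natE (negbTE Sc).
Qed.

Lemma pivot_kcoface i (u : K) c : kvalid i u -> pivot u = Some c -> c \notin u.1 ->
  0 < u.2 c /\ pivot (kcoface u c) = Some c.
Proof.
move=> valid_u piv_u u1c.
have pos_c : 0 < u.2 c.
  case E: (heavy u) => [l|]; last by rewrite (squarefree_exp valid_u (heavy_None E)) compl_mon_gt0.
  by move: (heavyP E); rewrite -(pivot_heavy E piv_u) /mdeg (negbTE u1c); lia.
split=> //; rewrite -piv_u; apply: pivot_eq => [l | no_heavy]; first by rewrite mdeg_kcoface.
apply: level_setU1 => //; first exact: squarefree_hitting valid_u (heavy_None no_heavy).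
exact: pivot_level no_heavy piv_u.
Qed.

Lemma pivot_kface (u : K) c : pivot u = Some c -> c \in u.1 -> u.2 c < n ->
  pivot (kface u c) = Some c.
Proof.
move=> piv_u u1c lt_c; rewrite -piv_u; apply: pivot_eq => [l | no_heavy].
  by rewrite mdeg_kface.
exact/level_setD1/(pivot_level no_heavy piv_u).
Qed.

Lemma pair_up_paired_up i (u : K) : u \in paired_up i ->
  pair_up u \in paired_down i.+1 /\ pair_down (pair_up u) = u.
Proof.
rewrite inE /pair_up /pair_down => /andP[valid_u].
case piv_u: (pivot u) => [c|] // u1c.
have [pos_c piv_c] := pivot_kcoface valid_u piv_u u1c.
rewrite piv_c kface_kcoface //; split => //.
rewrite inE kvalid_kcoface //= piv_c !inE eqxx kcoface_exp kface_kcoface // eqxx valid_u.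
by rewrite andbT; have := ltn_ord (u.2 c); lia.
Qed.

Lemma pair_down_paired_down i (u : K) : u \in paired_down i.+1 ->
  pair_down u \in paired_up i /\ pair_up (pair_down u) = u.
Proof.
rewrite inE /pair_up /pair_down => /andP[valid_u].
case piv_u: (pivot u) => [c|] // /and3P[u1c lt_c valid_face].
have piv_c := pivot_kface piv_u u1c lt_c.
by rewrite piv_c kcoface_kface // inE valid_face piv_c !inE eqxx.
Qed.

Lemma card_paired i : #|paired_up i| = #|paired_down i.+1|.
Proof.
have pair_upK : {in paired_up i, cancel pair_up pair_down}.
  by move=> u /pair_up_paired_up[].
rewrite -(card_in_imset (can_in_inj pair_upK)); apply: eq_card => u.
apply/imsetP/idP => [[v /pair_up_paired_up[? _] ->] // | down_u].
by have [? <-] := pair_down_paired_down down_u; exists (pair_down u).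
Qed.

Lemma sum_is_block_end_block k m : m <= t.+1 ->
  \sum_(k * t.+1 <= x < k * t.+1 + m) is_block_end x = \sum_(0 <= r < m) is_block_end r.
Proof.
move=> le_m; rewrite -{1}(add0n (k * t.+1)) big_addn addKn.
by apply: eq_big_nat => r lt_r; rewrite /is_block_end addnC modnMDl.
Qed.

Lemma sum_is_block_end_lt_t : \sum_(0 <= r < t) is_block_end r = 1.
Proof.
rewrite big_ltn // /is_block_end mod0n eqxx /= big_nat_cond big1 // => r.
case/andP => /andP[r_gt0 lt_r] _; rewrite modn_small; last lia.
by rewrite eqn0Ngt r_gt0 (ltn_eqF lt_r).
Qed.

Lemma sum_is_block_end_blocks k : \sum_(0 <= x < k * t.+1) is_block_end x = k.*2.
Proof.
elim: k => [|k IHk]; first by rewrite mul0n big_geq.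
rewrite mulSn addnC (@big_cat_nat _ _ _ (k * t.+1)) //= ?leq_addr // IHk.
rewrite sum_is_block_end_block // big_nat_recr //= sum_is_block_end_lt_t.
by rewrite /is_block_end modn_small // eqxx orbT; lia.
Qed.

Lemma card_block_ends : #|block_ends| = \sum_(0 <= x < n) is_block_end x.
Proof. by rewrite -sum_mem_card big_mkord; apply: eq_bigr => l _; rewrite inE. Qed.

Lemma card_block_ends_mod0 k : n = k * t.+1 -> #|block_ends| = k.*2.
Proof. by move=> n_eq; rewrite card_block_ends n_eq sum_is_block_end_blocks. Qed.

Lemma card_block_ends_modt k : n = k * t.+1 + t -> #|block_ends| = k.*2.+1.
Proof.
move=> n_eq; rewrite card_block_ends n_eq (@big_cat_nat _ _ _ (k * t.+1)) //= ?leq_addr //.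
by rewrite sum_is_block_end_blocks sum_is_block_end_block // sum_is_block_end_lt_t addn1.
Qed.

Definition critical_case := is_block_end n.

Definition crit_cell : K := (block_ends, [ffun l => inord (compl_mon block_ends l)]).

Lemma critical_not_heavy i (u : K) : u \in critical i -> heavy u = None.
Proof.
rewrite !inE negb_or => /andP[/andP[not_down not_up] valid_u].
case E: (heavy u) => [c|] //; have piv_u : pivot u = Some c by rewrite /pivot E.
rewrite valid_u piv_u /= negbK in not_down not_up.
have [lt_c valid_face] := kvalid_kface_heavy valid_u not_up (heavyP E).
by rewrite not_up lt_c valid_face in not_down.
Qed.

Lemma critical_support i (u : K) : u \in critical i -> critical_case /\ u.1 = block_ends.
Proof.
move=> crit_u; have no_heavy := critical_not_heavy crit_u; have le1 := heavy_None no_heavy.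
move: crit_u; rewrite !inE negb_or => /andP[/andP[not_down not_up] valid_u].
have [_ _ le_n] := level_spec u.1.
move: not_down not_up; rewrite valid_u /= /pivot no_heavy.
case: insubP => [c _ eq_c | ge_n] not_down not_up; last first.
  have full : level u.1 * t.+1 = n by lia.
  by split; [rewrite /critical_case /is_block_end -{1}full modnMl | exact: level_full].
rewrite negbK in not_up; have hit := squarefree_hitting valid_u le1.
rewrite not_up (squarefree_exp valid_u le1) /compl_mon not_up in not_down.
rewrite /= (kvalid_kface_squarefree valid_u le1 not_up) in not_down.
split; last exact: essential_level_start_block_ends hit not_up eq_c not_down.
rewrite /critical_case /is_block_end (essential_level_start_end hit not_up eq_c not_down) eq_c.
by rewrite modn_block // eqxx orbT.
Qed.

Lemma crit_cell_exp l : (crit_cell.2 l : nat) = compl_mon block_ends l.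
Proof. by rewrite ffunE inordK // /compl_mon; case: (l \in block_ends). Qed.

Lemma critical_eq i (u : K) :
  u \in critical i -> [/\ critical_case, u = crit_cell & i = #|block_ends|].
Proof.
move=> crit_u; have [case_n supp_u] := critical_support crit_u.
have le1 := heavy_None (critical_not_heavy crit_u).
move: crit_u; rewrite !inE => /andP[_ valid_u]; split=> //; last first.
  by case/and4P: valid_u => /eqP <-; rewrite supp_u.
have u_exp := squarefree_exp valid_u le1.
case: u valid_u le1 u_exp supp_u => S m _ _ u_exp /= eqS; congr pair => //.
apply/ffunP => l; apply: val_inj; rewrite /= -[RHS]/(crit_cell.2 l : nat) crit_cell_exp.
by rewrite u_exp eqS.
Qed.

Lemma kvalid_crit_cell : kvalid #|block_ends| crit_cell.
Proof.
apply/and4P; split => //.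
- by rewrite -[X in _ <= X]card_ord max_card.
- rewrite (eq_bigr (fun l => (l \in ~: block_ends) : nat)); last first.
    by move=> l _; rewrite crit_cell_exp inE.
  by rewrite sum_mem_card; apply/eqP; have := cardsC block_ends; rewrite card_ord; lia.
- suff <- : inI (compl_mon block_ends) = inI (fun l => crit_cell.2 l).
    exact: hitting_block_ends.
  by apply: in_path_ideal_supp_eq => l; rewrite crit_cell_exp.
Qed.

Lemma crit_cell_critical : critical_case -> crit_cell \in critical #|block_ends|.
Proof.
move=> case_n.
have le1 l : mdeg crit_cell l <= 1.
  by rewrite /mdeg crit_cell_exp /compl_mon; case: (l \in _).
have no_heavy : heavy crit_cell = None.
  by rewrite /heavy; case: pickP => // l; rewrite ltnNge le1.
have n_eq : n = n %/ t.+1 * t.+1 \/ n = n %/ t.+1 * t.+1 + t.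
  by case/orP: case_n => /eqP mod_n; [left | right]; rewrite {1}(divn_eq n t.+1) mod_n ?addn0.
rewrite !inE kvalid_crit_cell !andbT negb_or /pivot no_heavy (level_block_ends n_eq).
case: insubP => [c lt_c eq_c | //] /=.
have c_in : c \in block_ends by rewrite inE /is_block_end eq_c modnMl eqxx.
rewrite c_in (kvalid_kface_squarefree kvalid_crit_cell le1 c_in).
rewrite andbT andTb negb_and; apply/orP; right.
case: n_eq => n_eq; first by move: lt_c; rewrite -n_eq ltnn.
by apply: not_hitting_block_ends_setD1; rewrite eq_c ?modnMl.
Qed.

Lemma card_critical i : #|critical i| = critical_case && (i == #|block_ends|).
Proof.
have [/andP[case_n /eqP ->] | not_crit] := boolP (critical_case && _).
  rewrite (_ : critical _ = [set crit_cell]) ?cards1 //; apply/setP => u.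
  rewrite inE; apply/idP/eqP => [/critical_eq[_ -> _] // | ->].
  exact: crit_cell_critical.
apply/eqP; rewrite cards_eq0; apply: contraNT not_crit => /set0Pn[u /critical_eq[case_n _ ->]].
by rewrite case_n eqxx.
Qed.

Lemma card_critical_succ i : #|critical i| + #|critical i.+1| <= 1.
Proof.
rewrite !card_critical; case: critical_case => //=.
by case: eqP => [-> | _]; [rewrite eqn_leq ltnn | case: eqP].
Qed.

Lemma card_kvalid i :
  #|[set u : K | kvalid i u]| = #|paired_down i| + #|paired_down i.+1| + #|critical i|.
Proof.
have sub_down : paired_down i \subset [set u | kvalid i u].
  by apply/subsetP => u; rewrite !inE => /andP[].
have sub_up : paired_up i \subset [set u | kvalid i u].
  by apply/subsetP => u; rewrite !inE => /andP[].
have disjoint_paired : [disjoint paired_down i & paired_up i].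
  rewrite -setI_eq0; apply/eqP/setP => u; rewrite !inE.
  by case: (pivot u) => [c|]; [case: (c \in u.1); rewrite ?andbF | rewrite !andbF].
rewrite -card_paired /critical.
have := cardsID (paired_down i :|: paired_up i) [set u | kvalid i u].
rewrite (setIidPr _); last by rewrite subUset sub_down sub_up.
by rewrite cardsU (disjoint_setI0 disjoint_paired) cards0 subn0 => <-.
Qed.

Variable F : fieldType.
Local Notation kentry := (kdiff_entry F inI (j := n)).

Lemma kdiff_entry_pair_down i (u : K) : u \in paired_down i ->
  kentry i u (pair_down u) != 0%R.
Proof.
rewrite inE /pair_down => /andP[valid_u].
case: (pivot u) => [c|] // /and3P[u1c lt_c valid_face].
by rewrite kdiff_entry_kface // /ksign signr_eq0.
Qed.

(* Matched pairs are ordered by the level of the support: this makes the matching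
   acyclic, i.e. the matrix of matched entries triangular. *)
Lemma kdiff_entry_pair_down_level i (u u' : K) :
  u \in paired_down i -> u' \in paired_down i -> u != u' ->
  kentry i u (pair_down u') != 0%R -> level u.1 < level u'.1.
Proof.
move=> down_u down_u' neq_u /kdiff_entry_neq0[_ _ [k u1k [eq_face lt_k]]].
move: down_u' eq_face; rewrite inE /pair_down => /andP[_].
case piv_u': (pivot u') => [c'|] // /and3P[u'1c' lt_c' _] eq_face.
have neq_kc' : k != c'.
  apply: contraNneq neq_u => eq_k; rewrite -(kcoface_kface u1k lt_k) -eq_face eq_k.
  by rewrite kcoface_kface.
have eq_mdeg : mdeg u =1 mdeg u'.
  by move=> l; rewrite -(mdeg_kface u1k lt_k) -(mdeg_kface u'1c' lt_c') eq_face.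
have eqS : u.1 :\ k = u'.1 :\ c' by rewrite -[RHS]/(kface u' c').1 eq_face.
have u1c' : c' \notin u.1.
  have : c' \notin u.1 :\ k by rewrite eqS !inE eqxx.
  by rewrite !inE eq_sym neq_kc'.
move: down_u; rewrite inE => /andP[_].
case piv_u: (pivot u) => [c|] // /and3P[u1c _ _].
case E: (heavy u) => [l|].
  have E' : heavy u' = Some l by rewrite -(heavy_eq eq_mdeg).
  by move: u1c; rewrite (pivot_heavy E piv_u) -(pivot_heavy E' piv_u') (negbTE u1c').
have eq_c' := pivot_level (etrans (esym (heavy_eq eq_mdeg)) E) piv_u'.
have [lt_level eq_level] := level_exchange u1k u'1c' u1c' eqS eq_c'.
case: (ltngtP k c') => [/lt_level // | /eq_level eq_lev | /val_inj eq_k]; last first.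
  by rewrite eq_k eqxx in neq_kc'.
have : pivot u = Some c' by rewrite /pivot E eq_lev -eq_c'; exact: valK.
by rewrite piv_u => -[eq_c]; rewrite -eq_c u1c in u1c'.
Qed.

Local Notation rank i := (\rank (kdiff F inI n i)).

Lemma card_paired_down_le_rank i : #|paired_down i| <= rank i.
Proof.
apply: (card_le_mxrank_triangular (psi := pair_down) (rho := fun u : K => level u.1)).
  exact: kdiff_entry_pair_down.
exact: kdiff_entry_pair_down_level.
Qed.

Lemma rank_kdiff_add_le i : rank i.+1 + rank i <= #|[set u : K | kvalid i u]|.
Proof.
apply: mxrank_add_le_of_mul0.
- by move=> u v /kdiff_entry_neq0[_ valid_v _]; rewrite inE.
- by move=> v w /kdiff_entry_neq0[valid_v _ _]; rewrite inE.
- by move=> u w; apply: kdiff_entry_mul_eq0; apply: in_path_ideal_supp.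
Qed.

End LineComplex.

(* [V k] cells of degree [k], [R k] the rank of the differential out of degree [k],
   [D k] cells of degree [k] matched with a face, [C k] unmatched cells. *)
Lemma homology_dim_eq_critical (V R D C : nat -> nat) i :
  (forall k, D k <= R k) -> (forall k, R k.+1 + R k <= V k) ->
  (forall k, V k = D k + D k.+1 + C k) -> (forall k, C k + C k.+1 <= 1) ->
  V i.+1 - R i.+1 - R i.+2 = C i.+1.
Proof.
move=> DR RV VDC C_adj.
have := DR i; have := DR i.+1; have := DR i.+2; have := DR i.+3.
have := RV i; have := RV i.+1; have := RV i.+2.
have := VDC i; have := VDC i.+1; have := VDC i.+2.
have := C_adj i; have := C_adj i.+1; lia.
Qed.

Lemma betti_formula_critical n' t i : 0 < t ->
  (if n'.+1 %% t.+1 == 0 then nat_of_bool (i == (2 * n'.+1) %/ t.+1)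
   else if n'.+1 %% t.+1 == t then nat_of_bool (i.+1 == (2 * n'.+1 + 2) %/ t.+1)
   else 0) = critical_case n' t && (i == #|block_ends n' t|).
Proof.
move=> t_gt0; have n_eq := divn_eq n'.+1 t.+1; rewrite /critical_case /is_block_end.
case: eqP => [mod0 | _] /=.
  rewrite (card_block_ends_mod0 t_gt0 (k := n'.+1 %/ t.+1)); last by rewrite {1}n_eq mod0 addn0.
  by rewrite {1}n_eq mod0 addn0 mulnA mulnK // mul2n.
case: eqP => [modt | _] //=.
rewrite (card_block_ends_modt t_gt0 (k := n'.+1 %/ t.+1)); last by rewrite {1}n_eq modt.
rewrite (_ : 2 * n'.+1 + 2 = (n'.+1 %/ t.+1).*2.+2 * t.+1); last by rewrite {1}n_eq modt; lia.
by rewrite mulnK.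
Qed.

Theorem mainTheorem5 (F : fieldType) (t n : nat) (ht : 1 <= t) (hn : 1 <= n)
  (i : nat) (hi : 1 <= i) :
  betti F (in_path_ideal (line_graph n) t) n i =
  if n %% t.+1 == 0 then nat_of_bool (i == (2 * n) %/ t.+1)
  else if n %% t.+1 == t then nat_of_bool (i.+1 == (2 * n + 2) %/ t.+1)
  else 0.
Proof.
case: n hn => // n' _; case: i hi => // i _.
rewrite /betti (betti_formula_critical _ _ ht) -(card_critical n' ht).
pose inI := in_path_ideal (line_graph n'.+1) t.
apply: (@homology_dim_eq_critical (fun k => #|[set u | kvalid inI (j := n'.+1) k u]|)
  (fun k => \rank (kdiff F inI n'.+1 k)) (fun k => #|paired_down n' t k|)
  (fun k => #|critical n' t k|)).
- exact: card_paired_down_le_rank.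
- exact: rank_kdiff_add_le.
- exact: card_kvalid.
- exact: card_critical_succ.
Qed.
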